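(* The set $\ell^\infty\setminus S$ is strongly $\mathfrak{c}$-algebrable in the algebra $\ell^\infty$ (with pointwise operations).
   Context: $\ell^\infty$ is the algebra of bounded real sequences with coordinatewise operations. $S=\{x\in\ell^\infty\colon\lim_n\frac{x_1+\dots+x_n}{n}\text{ exists}\}$. A subset $A$ of a commutative algebra $\mathcal L$ is strongly $\kappa$-algebrable if $A\cup\{0\}$ contains a $\kappa$-generated subalgebra (minimal number of generators of cardinality $\kappa$) which is isomorphic to a free algebra; equivalently, there is a set $Z\subset\mathcal L$ of cardinality $\kappa$ such that for every $n$, every non-zero polynomial $P$ in $n$ variables without constant term and all distinct $z_1,\dots,z_n\in Z$, $P(z_1,\dots,z_n)\in A\setminus\{0\}$. $\mathfrak c$ is the cardinality of the continuum. *)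

From Stdlib Require Import Reals.
From mathcomp Require Import all_boot all_algebra.
From mathcomp Require Import Rstruct.
From mathcomp Require Import mpoly.

Set Implicit Arguments.
Unset Strict Implicit.
Unset Printing Implicit Defensive.

Definition linf (x : nat -> R) : Prop :=
  exists M : R, forall k : nat, (Rabs (x k) <= M)%R.

Definition cesaro_mean (x : nat -> R) (n : nat) : R :=
  (sum_f_R0 x n / INR (S n))%R.

Definition inS (x : nat -> R) : Prop :=
  linf x /\ exists l : R, Un_cv (cesaro_mean x) l.

Definition eval_seq (n : nat) (P : {mpoly R[n]}) (z : 'I_n -> nat -> R)
  : nat -> R :=
  fun k => P.@[fun i => z i k].

(* Strong c-algebrability of A (subset of real sequences, l^infty algebra):
   an injectively indexed family f : R -> l^infty (so its range Z has
   cardinality continuum) such that for all n, every nonzero P in n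
   variables with zero constant term and distinct z_1..z_n in Z,
   P(z_1,...,z_n) lies in A and is nonzero. *)
Definition strongly_c_algebrable (A : (nat -> R) -> Prop) : Prop :=
  exists f : R -> (nat -> R),
    injective f /\ (forall r, linf (f r)) /\
    forall (n : nat) (P : {mpoly R[n]}) (t : 'I_n -> R),
      (P != 0)%R -> (P@_0%MM = 0)%R -> injective t ->
      A (eval_seq P (fun i => f (t i))) /\
      eval_seq P (fun i => f (t i)) <> (fun _ => 0%R).

(* Each generator t is constant on every dyadic block [2^e, 2^(e+1)): block e
   carries either 0 or, for a code (N, L), the value 1/(L(floor(N t)) + 1), and 0
   as well as every code occurs on infinitely many blocks.  Given distinct
   t_1, ..., t_n and P <> 0, pick N separating the floor(N t_i) and a point of
   the grid {1/(v+1)}^n where P does not vanish; for the code sending floor(N t_i)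
   to v_i, P(x_{t_1}, ..., x_{t_n}) equals this nonzero value c on infinitely
   many blocks and P(0) = 0 on infinitely many others.  The Cesaro mean at the
   end of a block is the average of the mean at the end of the previous block and
   the block value, so a Cesaro limit would be both 0 and c. *)

From Stdlib Require Import Reals.
From mathcomp Require Import all_boot all_algebra.
From mathcomp Require Import Rstruct.
From mathcomp Require Import mpoly.
From mathcomp Require Import ring lra.

Set Implicit Arguments.
Unset Strict Implicit.
Unset Printing Implicit Defensive.

Import order.Order.TTheory GRing.Theory Num.Theory.
Local Open Scope ring_scope.

Lemma meval_at0 n (R : comRingType) (P : {mpoly R[n]}) :
  P.@[fun _ => 0] = P@_0%MM.
Proof.
rewrite [in RHS](mpolyE P) raddf_sum mevalE /=; apply: eq_bigr => m _.
rewrite mcoeffZ mcoeffX; congr (_ * _); have [->|m_neq0] := eqVneq m 0%MM.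
  by rewrite big1 // => i _; rewrite mnm0E expr0.
have [i mi_neq0] : exists i, m i != 0%N.
  apply/existsP; apply: contraR m_neq0; rewrite negb_exists => /forallP m0.
  by apply/eqP/mnmP => i; rewrite mnm0E; apply/eqP; rewrite -[_ == _]negbK m0.
by rewrite (bigD1 i) //= expr0n (negbTE mi_neq0) mul0r.
Qed.

Lemma meval_norm_le n (R : numDomainType) (P : {mpoly R[n]}) (w : 'I_n -> R) :
  (forall i, `|w i| <= 1) -> `|P.@[w]| <= \sum_(m <- msupp P) `|P@_m|.
Proof.
move=> w_le1; rewrite mevalE; apply: le_trans (ler_norm_sum _ _ _) _.
apply: ler_sum => m _; rewrite normrM ler_piMr // normr_prod prodr_ile1 // => i _.
by rewrite normrX exprn_ge0 //= exprn_ile1.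
Qed.

Section Univariate.
Variables (n : nat) (R : ringType).

Definition mnm_trunc (m : 'X_{1..n.+1}) : 'X_{1..n} :=
  [multinom m (widen_ord (leqnSn n) i) | i < n].

Lemma mnm_eq_split (m m' : 'X_{1..n.+1}) :
  (m == m') = (mnm_trunc m == mnm_trunc m') && (m ord_max == m' ord_max).
Proof.
apply/eqP/andP => [-> //|[/eqP eq_tr /eqP eq_max]]; apply/mnmP => i.
have [lt_in|] := ltnP i n; last first.
  rewrite leq_eqVlt ltnNge -ltnS ltn_ord orbF => /eqP eq_in.
  by have -> : i = ord_max by apply: val_inj.
have -> : i = widen_ord (leqnSn n) (Ordinal lt_in) by apply: val_inj.
by have := congr1 (fun m : 'X_{1..n} => m (Ordinal lt_in)) eq_tr; rewrite !mnmE.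
Qed.

Lemma coef_muni (P : {mpoly R[n.+1]}) (m : 'X_{1..n.+1}) :
  ((muni P)`_(m ord_max))@_(mnm_trunc m) = P@_m.
Proof.
rewrite muniE coef_sum raddf_sum [in RHS](mpolyE P) raddf_sum /=.
apply: eq_bigr => m' _; rewrite coefZ coefXn mulr_natr mcoeffMn !mcoeffZ !mcoeffX.
rewrite mnm_eq_split -/(mnm_trunc m') [m ord_max == _]eq_sym.
by case: (_ == _); case: (_ == _); rewrite ?mulr0n ?mulr1n ?mulr1 ?mulr0.
Qed.

End Univariate.

Lemma meval_muni n (R : comRingType) (P : {mpoly R[n.+1]}) (v : 'I_n.+1 -> R) :
  P.@[v] =
  (map_poly (meval (fun i => v (widen_ord (leqnSn n) i))) (muni P)).[v ord_max].
Proof.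
rewrite muniE mevalE raddf_sum horner_sum; apply: eq_bigr => m _ /=.
rewrite map_polyZ map_polyXn hornerZ hornerXn /= mevalZ mevalX big_ord_recr /=.
by rewrite mulrA; congr (_ * _ * _); apply: eq_bigr => i _; rewrite mnmE.
Qed.

Section Grid.
Variables (R : idomainType) (s : nat -> R).
Hypothesis s_inj : injective s.

Lemma poly_nonroot_seq (q : {poly R}) : q != 0 -> exists j, ~~ root q (s j).
Proof.
move=> q_neq0; have [all_roots|] := boolP (all (root q) (map s (iota 0 (size q)))).
  have := max_poly_roots q_neq0 all_roots.
  by rewrite map_inj_uniq // iota_uniq size_map size_iota ltnn => /(_ isT).
by case/allPn => _ /mapP[j _ ->]; exists j.
Qed.

Lemma mpoly_nonroot_grid n (P : {mpoly R[n]}) :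
  P != 0 -> exists v : 'I_n -> nat, P.@[fun i => s (v i)] != 0.
Proof.
elim: n P => [|n IH] P P_neq0.
  by exists (fun _ => 0%N); move: P_neq0; rewrite [P]nvar0_mpolyC mevalC mpolyC_eq0.
have [m m_supp] : exists m, m \in msupp P.
  case E: (msupp P) => [|m ?]; last by exists m; rewrite inE eqxx.
  by move: P_neq0; rewrite (msuppnil0 E) eqxx.
have coef_neq0 : (muni P)`_(m ord_max) != 0.
  apply: contraL m_supp => /eqP coef0.
  by rewrite mcoeff_msupp -coef_muni coef0 mcoeff0 eqxx.
have [v' Pv'] := IH _ coef_neq0.
set q := map_poly (meval (fun i => s (v' i))) (muni P).
have q_neq0 : q != 0.
  apply: contraNneq Pv' => /(congr1 (coefp (m ord_max))) /=.
  by rewrite coef0 coef_map => ->.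
have [j qj] := poly_nonroot_seq q_neq0.
exists (fun i : 'I_n.+1 => if unlift ord_max i is Some i' then v' i' else j).
rewrite meval_muni unlift_none.
suff -> : map_poly (meval (fun i => s (if unlift ord_max (widen_ord (leqnSn n) i)
    is Some i' then v' i' else j))) (muni P) = q by [].
apply: eq_map_poly => p; apply: meval_eq => i.
by rewrite (_ : widen_ord _ i = lift ord_max i) ?liftK //; exact/val_inj/esym/lift_max.
Qed.

End Grid.

Lemma floor_separates (R : archiFieldType) (I : finType) (t : I -> R) :
  injective t -> exists N : nat, injective (fun i => Num.floor (N%:R * t i)).
Proof.
move=> t_inj.
pose N := (\sum_(p : I * I | p.1 != p.2) (Num.trunc (`|t p.1 - t p.2|^-1)%R).+1)%N.
exists N => i j eq_floor; apply/eqP/negPn/negP => i_neq_j.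
have dist_gt0 : 0 < `|t i - t j| by rewrite normr_gt0 subr_eq0 (inj_eq t_inj).
have N_gt : `|t i - t j|^-1 < N%:R.
  apply: lt_le_trans (truncnS_gt _) _; rewrite ler_nat /N (bigD1 (i, j)) //=.
  exact: leq_addr.
have far : 1 < `|N%:R * t i - N%:R * t j|.
  by rewrite -mulrBr normrM normr_nat -ltr_pdivrMr // div1r.
have := floor_itv (N%:R * t i); have := floor_itv (N%:R * t j).
rewrite eq_floor intrD => /andP[lej ltj] /andP[lei lti].
by move: far; rewrite real_ltr_normr ?num_real // => /orP[]; lra.
Qed.

Definition lookup (K : eqType) (L : seq (K * nat)) (k : K) : nat :=
  nth 0%N (unzip2 L) (index k (unzip1 L)).

Lemma lookup_graph (K : eqType) (I : finType) (z : I -> K) (v : I -> nat) :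
  injective z -> forall i, lookup [seq (z j, v j) | j <- enum I] (z i) = v i.
Proof.
move=> z_inj i; rewrite /lookup.
have -> : unzip1 [seq (z j, v j) | j <- enum I] = map z (enum I).
  by elim: (enum I) => //= j s ->.
have -> : unzip2 [seq (z j, v j) | j <- enum I] = map v (enum I).
  by elim: (enum I) => //= j s ->.
by rewrite index_map // (nth_map i) ?index_mem ?mem_enum // nth_index ?mem_enum.
Qed.

Definition const_on_block (x : nat -> R) (e : nat) (c : R) :=
  forall k, (2 ^ e <= k < 2 ^ e.+1)%N -> x k = c.

Definition recurrent_block_value (x : nat -> R) (c : R) :=
  forall E, exists2 e, (E <= e)%N & const_on_block x e c.

Lemma pow2_in_block e : (2 ^ e <= 2 ^ e < 2 ^ e.+1)%N.
Proof. by rewrite leqnn ltn_exp2l ?ltnSn. Qed.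

Lemma cesaro_mean_pow2 (x : nat -> R) e :
  cesaro_mean x (2 ^ e).-1 = (\sum_(0 <= k < 2 ^ e) x k) / (2 ^ e)%:R.
Proof. by rewrite /cesaro_mean sum_f_R0E INRE prednK ?expn_gt0. Qed.

Lemma cesaro_mean_block (x : nat -> R) e c : const_on_block x e c ->
  cesaro_mean x (2 ^ e.+1).-1 = (cesaro_mean x (2 ^ e).-1 + c) / 2.
Proof.
move=> x_block; rewrite !cesaro_mean_pow2 (@big_cat_nat _ _ _ (2 ^ e)) //=;
  last by rewrite leq_exp2l.
rewrite (eq_big_nat _ _ x_block) sumr_const_nat expnS mul2n -addnn addnK natrD.
have pow_gt0 : 0 < (2 ^ e)%:R :> R by rewrite ltr0n expn_gt0.
by rewrite -mulr_natr; field; rewrite !gt_eqF ?addr_gt0.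
Qed.

Lemma cesaro_lim_block_value (x : nat -> R) l c :
  Un_cv (cesaro_mean x) l -> recurrent_block_value x c -> c = l.
Proof.
move=> cvg_l c_rec; apply/eqP; apply: contraT => c_neq_l.
have eps_gt0 : 0 < `|c - l| / 3 by rewrite divr_gt0 // normr_gt0 subr_eq0.
have [N near_l] := cvg_l _ (elimT RltP eps_gt0).
have near_pow2 e : (N <= e)%N -> `|cesaro_mean x (2 ^ e).-1 - l| < `|c - l| / 3.
  move=> le_Ne; apply/RltP; rewrite -RabsE -RminusE; apply: near_l; apply/ssrnat.leP.
  by rewrite -ltnS prednK ?expn_gt0 // (leq_ltn_trans le_Ne) // ltn_expl.
have [e le_Ne x_block] := c_rec N.
have := near_pow2 _ (leqW le_Ne); rewrite (cesaro_mean_block x_block).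
have := near_pow2 _ le_Ne; set m := cesaro_mean x _ => near_m near_next.
suff : `|c - l| < `|c - l| by rewrite ltxx.
rewrite {1}(_ : c - l = ((m + c) / 2 - l) *+ 2 - (m - l)); last first.
  by rewrite -mulr_natr; field.
by apply: le_lt_trans (ler_normB _ _) _; rewrite normrMn; lra.
Qed.

Lemma cesaro_divergent (x : nat -> R) c : c != 0 ->
  recurrent_block_value x 0 -> recurrent_block_value x c ->
  ~ exists l, Un_cv (cesaro_mean x) l.
Proof.
move=> c_neq0 rec0 rec_c [l cvg_l].
have c_eq_l := cesaro_lim_block_value cvg_l rec_c.
have zero_eq_l := cesaro_lim_block_value cvg_l rec0.
by rewrite c_eq_l -zero_eq_l eqxx in c_neq0.
Qed.

Lemma recurrent_block_value_neq0 (x : nat -> R) c : c != 0 ->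
  recurrent_block_value x c -> x <> (fun _ => 0).
Proof.
move=> c_neq0 rec_c x0; have [e _ x_block] := rec_c 0%N.
have x_pow2 : x (2 ^ e)%N = c by apply/x_block/pow2_in_block.
by rewrite -x_pow2 x0 eqxx in c_neq0.
Qed.

Definition grid_pt (v : nat) : R := v.+1%:R^-1.

Lemma grid_pt_inj : injective grid_pt.
Proof. by move=> u v /invr_inj/eqP; rewrite eqr_nat eqSS => /eqP. Qed.

Lemma grid_pt_norm_le1 v : `|grid_pt v| <= 1.
Proof. by rewrite ger0_norm ?invr_ge0 // invf_le1 ?ler1n. Qed.

Definition code := (nat * seq (int * nat))%type.

Definition decode (d : code) (t : R) : R :=
  grid_pt (lookup d.2 (Num.floor (d.1%:R * t))).

Lemma decode_interpolates (I : finType) (t : I -> R) (v : I -> nat) :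
  injective t -> exists d : code, forall i, decode d (t i) = grid_pt (v i).
Proof.
move=> /floor_separates[N floor_inj].
exists (N, [seq (Num.floor (N%:R * t j), v j) | j <- enum I]) => i.
by rewrite /decode lookup_graph.
Qed.

Lemma decode_nonroot n (P : {mpoly R[n]}) (t : 'I_n -> R) :
  P != 0 -> injective t -> exists d : code, P.@[fun i => decode d (t i)] != 0.
Proof.
move=> /(mpoly_nonroot_grid grid_pt_inj)[v Pv] /(decode_interpolates v)[d dv].
by exists d; under meval_eq => i do rewrite dv.
Qed.

Definition block_code (e : nat) : option code :=
  if logn 2 e.+1 is m.+1 then unpickle m else None.

Lemma block_code_None E : exists2 e, (E <= e)%N & block_code e = None.
Proof.
exists E.*2; first by rewrite -addnn leq_addr.
by rewrite /block_code logn_coprime // coprime2n /= odd_double.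
Qed.

Lemma block_code_Some (d : code) E : exists2 e, (E <= e)%N & block_code e = Some d.
Proof.
have odd_gt0 : (0 < 2 ^ (pickle d).+1 * E.*2.+1)%N by rewrite muln_gt0 expn_gt0.
exists (2 ^ (pickle d).+1 * E.*2.+1).-1.
  rewrite -ltnS prednK // (leq_trans _ (leq_pmull _ _)) ?expn_gt0 //.
  by rewrite ltnS -addnn leq_addr.
rewrite /block_code prednK // lognM ?expn_gt0 // pfactorK // logn_coprime.
  by rewrite addn0 pickleK.
by rewrite coprime2n /= odd_double.
Qed.

Definition free_gen (t : R) (k : nat) : R :=
  if block_code (trunc_log 2 k) is Some d then decode d t else 0.

Lemma free_gen_block t e k : (2 ^ e <= k < 2 ^ e.+1)%N ->
  free_gen t k = if block_code e is Some d then decode d t else 0.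
Proof. by move=> /trunc_log_eq; rewrite /free_gen => ->. Qed.

Lemma free_gen_norm_le1 t k : `|free_gen t k| <= 1.
Proof.
by rewrite /free_gen; case: block_code => [d|]; rewrite ?grid_pt_norm_le1 ?normr0.
Qed.

Lemma free_gen_linf t : linf (free_gen t).
Proof. by exists 1 => k; rewrite RabsE free_gen_norm_le1. Qed.

Lemma free_gen_inj : injective free_gen.
Proof.
move=> r1 r2 gen_eq; apply/eqP/negPn/negP => r_neq.
pose t (b : bool) := if b then r1 else r2.
have t_inj : injective t.
  by move=> [] [] //= r_eq; rewrite r_eq eqxx in r_neq.
have [d decode_t] := decode_interpolates nat_of_bool t_inj.
have [e _ e_code] := block_code_Some d 0.
have := congr1 (fun x => x (2 ^ e)%N) gen_eq.
rewrite /= !(free_gen_block _ (pow2_in_block e)) e_code.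
by rewrite (decode_t true) (decode_t false) => /grid_pt_inj.
Qed.

Section EvalFreeGen.
Variables (n : nat) (P : {mpoly R[n]}) (t : 'I_n -> R).

Let x := eval_seq P (fun i => free_gen (t i)).

Lemma eval_free_gen_block e :
  const_on_block x e
    (if block_code e is Some d then P.@[fun i => decode d (t i)] else P@_0%MM).
Proof.
move=> k k_block; rewrite /x /eval_seq.
rewrite (meval_eq _ (fun i => free_gen_block (t i) k_block)).
by case: block_code => [d|] //; exact: meval_at0.
Qed.

Lemma eval_free_gen_linf : linf x.
Proof.
exists (\sum_(m <- msupp P) `|P@_m|) => k; rewrite RabsE.
by apply: meval_norm_le => i; exact: free_gen_norm_le1.
Qed.

Lemma eval_free_gen_recurrent_const : recurrent_block_value x P@_0%MM.
Proof.
move=> E; have [e le_Ee e_code] := block_code_None E.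
by exists e => //; have := @eval_free_gen_block e; rewrite e_code.
Qed.

Lemma eval_free_gen_recurrent_decode d :
  recurrent_block_value x P.@[fun i => decode d (t i)].
Proof.
move=> E; have [e le_Ee e_code] := block_code_Some d E.
by exists e => //; have := @eval_free_gen_block e; rewrite e_code.
Qed.

End EvalFreeGen.

Theorem theorem3p5 :
  strongly_c_algebrable (fun x => linf x /\ ~ inS x).
Proof.
exists free_gen; split; first exact: free_gen_inj.
split=> [|n P t P_neq0 P0 t_inj]; first exact: free_gen_linf.
have [d Pd] := decode_nonroot P_neq0 t_inj.
have rec_d := eval_free_gen_recurrent_decode P t d.
have rec0 := eval_free_gen_recurrent_const P t; rewrite P0 in rec0.
split; last exact: recurrent_block_value_neq0 Pd rec_d.
split=> [|[_]]; first exact: eval_free_gen_linf.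
exact: cesaro_divergent Pd rec0 rec_d.
Qed.
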